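(* Let $\Sigma=\{\mathtt{a},\mathtt{b},\mathtt{c}\}$. Define $F_0=\mathtt{a}$, $F_1=\mathtt{ab}$, and $F_i=F_{i-1}\cdot F_{i-2}$ for $i\ge 2$. Then the language $L_{\mathsf{fib}}=\{\mathtt{c}F_0\mathtt{c}F_1\mathtt{c}\cdots\mathtt{c}F_n\mathtt{c} : n\in\mathbb{N}\}$ belongs to $\mathcal{L}(\mathsf{FC})$.
   Context: For $w \in \Sigma^*$, $\mathsf{Facs}(w)$ is the set of all factors of $w$. The structure $\mathfrak{A}_w$ representing $w$ has universe $\mathsf{Facs}(w)\cup\{\perp\}$, a ternary relation $R_\circ=\{(x,y,z)\in\mathsf{Facs}(w)^3 : x=y\cdot z\}$, for each letter a constant interpreted as that letter if it occurs in $w$ and as $\perp$ otherwise, and a constant $\varepsilon$ interpreted as the empty word. $\mathsf{FC}$ is first-order logic over such structures, with atomic formulas $(x \mathbin{\dot=} y\cdot z)$ (meaning $R_\circ(x,y,z)$) where $x,y,z$ are variables, letters of $\Sigma$, or $\varepsilon$, closed under $\land,\lor,\neg,\exists,\forall$; quantified variables range over $\mathsf{Facs}(w)$. For a sentence $\varphi$, $\mathcal{L}(\varphi)=\{w\in\Sigma^*:\mathfrak{A}_w\models\varphi\}$, and $\mathcal{L}(\mathsf{FC})$ is the class of all such languages. *)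

From HB Require Import structures.
From mathcomp Require Import all_boot.
Set Implicit Arguments. Unset Strict Implicit. Unset Printing Implicit Defensive.

Inductive letter := La | Lb | Lc.

Definition letter_eqb (x y : letter) : bool :=
  match x, y with
  | La, La | Lb, Lb | Lc, Lc => true
  | _, _ => false
  end.
Lemma letter_eqP : Equality.axiom letter_eqb.
Proof. by case; case; constructor. Qed.
HB.instance Definition _ := hasDecEq.Build letter letter_eqP.

Definition word := seq letter.

Definition is_factor (u w : word) : bool := infix u w.

Inductive fc_term := TVar of nat | TLet of letter | TEps.

Inductive fc_formula :=
| FCat of fc_term & fc_term & fc_term   (* (x =. y . z) *)
| FAnd of fc_formula & fc_formula
| FOr  of fc_formula & fc_formula
| FNot of fc_formula
| FEx  of nat & fc_formula
| FAll of nat & fc_formula.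

Definition term_fv (t : fc_term) : seq nat :=
  if t is TVar n then [:: n] else [::].

Fixpoint fv (f : fc_formula) : seq nat :=
  match f with
  | FCat x y z => term_fv x ++ term_fv y ++ term_fv z
  | FAnd f g | FOr f g => fv f ++ fv g
  | FNot f => fv f
  | FEx n f | FAll n f => filter (fun m => m != n) (fv f)
  end.

Definition sentence (f : fc_formula) : Prop := fv f = [::].

(* Elements of the universe Facs(w) ∪ {⊥}: None is ⊥. *)
Definition valuation := nat -> word.

Definition upd (s : valuation) (n : nat) (u : word) : valuation :=
  fun m => if m == n then u else s m.

Definition eval_term (w : word) (s : valuation) (t : fc_term) : option word :=
  match t with
  | TVar n => Some (s n)
  | TLet a => if a \in w then Some [:: a] else None
  | TEps => Some [::]
  end.

Definition R_cat (w x y z : word) : Prop :=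
  [/\ is_factor x w, is_factor y w, is_factor z w & x = y ++ z].

Fixpoint sat (w : word) (s : valuation) (f : fc_formula) : Prop :=
  match f with
  | FCat x y z =>
      match eval_term w s x, eval_term w s y, eval_term w s z with
      | Some u, Some v, Some r => R_cat w u v r
      | _, _, _ => False
      end
  | FAnd f g => sat w s f /\ sat w s g
  | FOr f g => sat w s f \/ sat w s g
  | FNot f => ~ sat w s f
  | FEx n f => exists u, is_factor u w /\ sat w (upd s n u) f
  | FAll n f => forall u, is_factor u w -> sat w (upd s n u) f
  end.

(* For a sentence the valuation is irrelevant; we use the one sending
   every variable to epsilon (which is a factor of every w). *)
Definition models (w : word) (f : fc_formula) : Prop := sat w (fun _ => [::]) f.

Definition lang_of (f : fc_formula) : word -> Prop := fun w => models w f.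

Definition in_L_FC (L : word -> Prop) : Prop :=
  exists f, sentence f /\ forall w, L w <-> lang_of f w.

Fixpoint fib_pair (n : nat) : word * word :=
  (* returns (F_n, F_{n+1}) *)
  match n with
  | 0 => ([:: La], [:: La; Lb])
  | n'.+1 => let: (p, q) := fib_pair n' in (q, q ++ p)
  end.
Definition fib (n : nat) : word := (fib_pair n).1.

Definition fib_block (n : nat) : word :=
  Lc :: flatten [seq fib i ++ [:: Lc] | i <- iota 0 n.+1].

Definition L_fib (w : word) : Prop := exists n : nat, w = fib_block n.

Lemma fib_rec n : fib n.+2 = fib n.+1 ++ fib n.
Proof. rewrite /fib /=; by case: (fib_pair n). Qed.
Lemma fib0 : fib 0 = [:: La]. Proof. by []. Qed.
Lemma fib1 : fib 1 = [:: La; Lb]. Proof. by []. Qed.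

From Stdlib Require Import Setoid.
From mathcomp Require Import all_boot.
Set Implicit Arguments. Unset Strict Implicit. Unset Printing Implicit Defensive.

(* A word starting with c and ending with c is c :: enc bs
   for a unique list bs of c-free blocks, where enc bs = b_1 c b_2 c ... b_m c.
   Such a word belongs to L_fib iff bs is a list of Fibonacci words, and this is
   captured by three local conditions on the word (the predicate fib_shape):
   (1) it is cac or starts with cacabc, i.e. the first blocks are F_0 (and F_1);
   (2) it ends with c;
   (3) for all c-free x, y, z such that cxcyczc is a factor, z = y x.
   Condition (3) says that any three consecutive blocks obey the Fibonacci
   recurrence, which together with (1) forces bs = [F_0; ...; F_n].

   The workhorse is a formula
   cat_pattern asserting that a variable equals a given concatenation of terms
   (introducing fresh variables for the intermediate suffixes); together with a
   formula characterising the whole word as the factor that cannot be extended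
   by any letter, this yields a sentence whose models are exactly fib_shape. *)

Lemma infix_maximal (T : eqType) (u v : seq T) : infix u v ->
  (forall a, ~~ infix (a :: u) v /\ ~~ infix (rcons u a) v) -> u = v.
Proof.
case/infixP=> p [q ->] maximal; case/lastP: p maximal => [|p a] maximal.
  case: q maximal => [|a q] maximal; first by rewrite cats0.
  have [_ /negP[]] := maximal a.
  by rewrite /= -cats1 -[a :: q]/([:: a] ++ q) catA prefix_infix.
have [no_left _] := maximal a; case/negP: no_left.
by rewrite -cats1 -catA; exact: (infix_infix p (a :: u) q).
Qed.

Lemma infix_triple (T : eqType) (x0 : T) (s : seq T) x y z :
  reflect (exists2 i, i.+2 < size s &
             [/\ nth x0 s i = x, nth x0 s i.+1 = y & nth x0 s i.+2 = z])
          (infix [:: x; y; z] s).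
Proof.
apply: (iffP (@infixP T _ _)) => [[p [q ->]]|[i lt_i [<- <- <-]]].
  exists (size p); first by rewrite size_cat /= !addnS ltnS leq_addr.
  have nth_shift k : nth x0 (p ++ [:: x; y; z] ++ q) (size p + k) = nth x0 [:: x, y, z & q] k.
    by rewrite nth_cat ltnNge leq_addr /= addKn.
  by split; [rewrite -[size p]addn0 | rewrite -addn1 | rewrite -addn2]; rewrite nth_shift.
exists (take i s), (drop i.+3 s); rewrite -{1}(cat_take_drop i s).
by rewrite (drop_nth x0 (ltnW (ltnW lt_i))) (drop_nth x0 (ltnW lt_i)) (drop_nth x0 lt_i).
Qed.

Definition c_free (u : word) : bool := Lc \notin u.

Definition enc (bs : seq word) : word := flatten [seq b ++ [:: Lc] | b <- bs].

Lemma enc_cons b bs : enc (b :: bs) = b ++ Lc :: enc bs.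
Proof. by rewrite /enc /= -catA. Qed.

Lemma enc_cat bs1 bs2 : enc (bs1 ++ bs2) = enc bs1 ++ enc bs2.
Proof. by rewrite /enc map_cat flatten_cat. Qed.

Lemma enc_nil bs : enc bs = [::] -> bs = [::].
Proof. by case: bs => // b bs; rewrite enc_cons; case: b. Qed.

Lemma enc_block_infix b bs : b \in bs -> infix b (enc bs).
Proof. by case/splitPr=> p q; rewrite enc_cat enc_cons infix_infix. Qed.

Lemma c_enc_last bs : suffix [:: Lc] (Lc :: enc bs).
Proof.
elim/last_ind: bs => [|bs b _] //; rewrite -cats1 enc_cat enc_cons /=.
by rewrite -cat_cons catA suffix_suffix.
Qed.

Lemma c_free_cut b u r t : c_free b -> b ++ Lc :: r = u ++ Lc :: t ->
  exists2 m, u = b ++ m & Lc :: r = m ++ Lc :: t.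
Proof.
elim: b u => [|x b IH] u /=; first by move=> _ E; exists u.
rewrite /c_free inE negb_or => /andP[x_neq b_free]; case: u => [|y u] /=.
  by case=> x_eq; rewrite x_eq eqxx in x_neq.
by case=> -> /(IH u b_free) [m -> E]; exists m.
Qed.

Lemma c_free_cut_eq b u r t : c_free b -> c_free u ->
  b ++ Lc :: r = u ++ Lc :: t -> b = u /\ r = t.
Proof.
move=> b_free u_free /(c_free_cut b_free) [[|y m] u_eq]; first by rewrite u_eq cats0; case.
by case=> y_eq _; move: u_free; rewrite /c_free u_eq mem_cat inE y_eq eqxx orbT.
Qed.

Lemma enc_prefix bs us q : all c_free bs -> all c_free us ->
  enc bs = enc us ++ q -> prefix us bs.
Proof.
elim: us bs => [|u us IH] [|b bs] //= bs_free /andP[u_free us_free].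
  by rewrite enc_cons; case: u {u_free}.
case/andP: bs_free => b_free bs_free.
rewrite !enc_cons -catA => /(c_free_cut_eq b_free u_free) [-> /IH].
by rewrite eqxx => ->.
Qed.

Lemma enc_inj bs us : all c_free bs -> all c_free us -> enc bs = enc us -> bs = us.
Proof.
move=> bs_free us_free enc_eq; have := enc_eq; rewrite -[enc us]cats0.
move/(enc_prefix bs_free us_free)/prefixP => [bs' bs_eq].
move: enc_eq; rewrite bs_eq enc_cat => /(congr1 size); rewrite size_cat -{2}[size _]addn0.
by move=> /addnI /size0nil /enc_nil ->; rewrite cats0.
Qed.

Lemma enc_infix bs us p q : all c_free bs -> all c_free us ->
  Lc :: enc bs = p ++ Lc :: enc us ++ q -> infix us bs.
Proof.
move=> bs_free us_free; elim: bs p bs_free => [|b bs IH] [|y p] /=.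
- by case: us us_free => // u us _ _ []; rewrite enc_cons; case: u.
- by move=> _ [_]; case: p.
- by move=> bs_free [/(enc_prefix (bs := b :: bs) bs_free us_free) /prefixW].
- case/andP=> b_free bs_free [_]; rewrite enc_cons => /(c_free_cut b_free) [m _].
  by move/(IH m bs_free)=> ->; rewrite orbT.
Qed.

Lemma enc_factorE bs us : all c_free bs -> all c_free us ->
  is_factor (Lc :: enc us) (Lc :: enc bs) = infix us bs.
Proof.
move=> bs_free us_free; apply/idP/idP => [/infixP [p [q E]]|/infixP [p [q ->]]].
  exact: enc_infix bs_free us_free E.
have /suffixP [p' Ep] := c_enc_last p.
by apply/infixP; exists p', (enc q); rewrite !enc_cat -cat_cons Ep -catA.
Qed.

Lemma c_split_enc t : exists bs l, [/\ all c_free bs, c_free l & t = enc bs ++ l].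
Proof.
elim: t => [|x t [bs [l [bs_free l_free ->]]]]; first by exists [::], [::].
have [->|x_neq] := eqVneq x Lc; first by exists ([::] :: bs), l.
case: bs bs_free => [|b bs] bs_free.
  by exists [::], (x :: l); rewrite /c_free inE negb_or eq_sym x_neq.
exists ((x :: b) :: bs), l; split=> //.
by move: bs_free; rewrite /= /c_free inE negb_or eq_sym x_neq.
Qed.

Lemma c_ended_enc t : suffix [:: Lc] (Lc :: t) ->
  exists2 bs, all c_free bs & t = enc bs.
Proof.
have [bs [l [bs_free l_free ->]]] := c_split_enc t; move/suffixP => [p E].
exists bs => //; case/lastP: l l_free E => [|l x]; first by rewrite cats0.
rewrite /c_free -cats1 catA -cat_cons mem_cat negb_or => /andP[_ x_neq].
move/(congr1 (last Lc)); rewrite !last_cat /= => x_eq.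
by rewrite x_eq inE eqxx in x_neq.
Qed.

Definition fib_seq (n : nat) : seq word := [seq fib i | i <- iota 0 n].

Lemma size_fib_seq n : size (fib_seq n) = n.
Proof. by rewrite size_map size_iota. Qed.

Lemma nth_fib_seq n i : i < n -> nth [::] (fib_seq n) i = fib i.
Proof. by move=> lt_i; rewrite (nth_map 0) ?nth_iota ?size_iota. Qed.

Lemma fib_block_enc n : fib_block n = Lc :: enc (fib_seq n.+1).
Proof. by rewrite /fib_block /enc -map_comp. Qed.

Lemma fib_c_free i : c_free (fib i).
Proof.
suff: c_free (fib_pair i).1 /\ c_free (fib_pair i).2 by case.
elim: i => [|i] //=; case: (fib_pair i) => p q [p_free q_free]; split=> //.
by move: p_free q_free; rewrite /c_free mem_cat negb_or => -> ->.
Qed.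

Lemma fib_seq_c_free n : all c_free (fib_seq n).
Proof. by apply/allP => _ /mapP [i _ ->]; exact: fib_c_free. Qed.

Definition fib_like (bs : seq word) : Prop :=
  forall x y z, infix [:: x; y; z] bs -> z = y ++ x.

Lemma fib_seq_fib_like n : fib_like (fib_seq n).
Proof.
move=> x y z /(infix_triple [::]) [i]; rewrite size_fib_seq => lt_i.
have lt_i1 : i.+1 < n := ltnW lt_i; have lt_i0 : i < n := ltnW lt_i1.
by rewrite !nth_fib_seq // => -[<- <- <-]; exact: fib_rec.
Qed.

Lemma fib_like_fib_seq bs : fib_like bs -> prefix [:: fib 0; fib 1] bs ->
  bs = fib_seq (size bs).
Proof.
move=> bs_fib /prefixP [bs' bs_eq].
suff nth_bs k : k.+1 < size bs ->
    nth [::] bs k = fib k /\ nth [::] bs k.+1 = fib k.+1.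
  apply: (@eq_from_nth _ [::]) => [|i lt_i]; first by rewrite size_fib_seq.
  rewrite nth_fib_seq //; case: i lt_i => [|i] lt_i; first by rewrite bs_eq.
  exact: (nth_bs i lt_i).2.
elim: k => [|k IH] lt_k; first by rewrite bs_eq.
have [nth_k nth_k1] := IH (ltnW lt_k); split=> //.
have triple : infix [:: nth [::] bs k; nth [::] bs k.+1; nth [::] bs k.+2] bs.
  by apply/(infix_triple [::]); exists k.
by rewrite (bs_fib _ _ _ triple) nth_k nth_k1 fib_rec.
Qed.

Definition triples_recur (w : word) : Prop :=
  forall x y z, c_free x -> c_free y -> c_free z ->
  is_factor (Lc :: enc [:: x; y; z]) w -> z = y ++ x.

Lemma triples_recur_enc bs : all c_free bs ->
  triples_recur (Lc :: enc bs) <-> fib_like bs.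
Proof.
move=> bs_free; split=> [recur x y z xyz_infix | bs_fib x y z x_free y_free z_free].
  have xyz_free : all c_free [:: x; y; z].
    by apply/allP => u /(mem_infix xyz_infix); apply/allP.
  case/and4P: (xyz_free) => x_free y_free z_free _.
  by apply: recur; rewrite // enc_factorE.
by rewrite enc_factorE /= ?x_free ?y_free ?z_free //; apply: bs_fib.
Qed.

Definition fib_shape (w : word) : Prop :=
  [/\ w = [:: Lc; La; Lc] \/ prefix [:: Lc; La; Lc; La; Lb; Lc] w,
      suffix [:: Lc] w & triples_recur w].

Lemma fib_block_shape n : fib_shape (fib_block n).
Proof.
rewrite fib_block_enc; split; last 2 first.
- exact: c_enc_last.
- by apply/triples_recur_enc; [exact: fib_seq_c_free | exact: fib_seq_fib_like].
case: n => [|n]; [by left | right].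
by apply/prefixP; exists (enc [seq fib i | i <- iota 2 n]).
Qed.

Lemma fib_shape_block w : fib_shape w -> L_fib w.
Proof.
case=> start ends recur.
have [t w_eq] : exists t, w = Lc :: t by case: start => [->|/prefixP [r ->]]; eexists.
rewrite w_eq in start ends recur; have [bs bs_free t_eq] := c_ended_enc ends.
rewrite t_eq in w_eq start recur; move/(triples_recur_enc bs_free): recur => bs_fib.
case: start => [[] | /prefixP [r []]] enc_eq.
  exists 0; rewrite w_eq fib_block_enc.
  by rewrite (@enc_inj bs (fib_seq 1)) ?fib_seq_c_free.
have bs_prefix : prefix [:: fib 0; fib 1] bs.
  exact: (enc_prefix (us := [:: fib 0; fib 1]) bs_free _ enc_eq).
exists (size bs).-1; rewrite w_eq fib_block_enc prednK -?(fib_like_fib_seq bs_fib) //.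
by apply: leq_trans (size_prefix bs_prefix).
Qed.

Section Semantics.
Variable w : word.

(* The word denoted by a term, ignoring whether a letter occurs in w. *)
Definition term_word (s : valuation) (t : fc_term) : word :=
  match t with TVar n => s n | TLet a => [:: a] | TEps => [::] end.

Lemma eval_term_some s t u : eval_term w s t = Some u -> u = term_word s t.
Proof. by case: t => [n|a|] /=; [case | case: ifP => // _ [] | case]. Qed.

Lemma eval_term_factor s t :
  is_factor (term_word s t) w -> eval_term w s t = Some (term_word s t).
Proof. by case: t => //= a; rewrite /is_factor infix1s => ->. Qed.

(* Concatenation atoms: the constants are defined as soon as x is a factor. *)
Lemma sat_cat s i t1 t2 : sat w s (FCat (TVar i) t1 t2) <->
  is_factor (s i) w /\ s i = term_word s t1 ++ term_word s t2.
Proof.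
split=> /=.
  case E1: (eval_term w s t1) => [u1|] //; case E2: (eval_term w s t2) => [u2|] //.
  by case=> Fi _ _ Ei; rewrite Ei -(eval_term_some E1) -(eval_term_some E2) -Ei.
move=> [Fi Ei]; have F12 := Fi; rewrite Ei in F12.
have F1 := catr_infix F12; have F2 := catl_infix F12.
by rewrite (eval_term_factor F1) (eval_term_factor F2).
Qed.

Lemma sat_ex s n f :
  sat w s (FEx n f) <-> exists u, is_factor u w /\ sat w (upd s n u) f.
Proof. by []. Qed.

Lemma sat_all s n f :
  sat w s (FAll n f) <-> forall u, is_factor u w -> sat w (upd s n u) f.
Proof. by []. Qed.

Lemma sat_and s f g : sat w s (FAnd f g) <-> sat w s f /\ sat w s g.
Proof. by []. Qed.

Lemma sat_or s f g : sat w s (FOr f g) <-> sat w s f \/ sat w s g.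
Proof. by []. Qed.

Lemma sat_not s f : sat w s (FNot f) <-> ~ sat w s f.
Proof. by []. Qed.

Lemma upd_eq s n u : upd s n u n = u. Proof. by rewrite /upd eqxx. Qed.

Lemma upd_neq s n u m : m != n -> upd s n u m = s m.
Proof. by rewrite /upd => /negbTE ->. Qed.

Definition term_below (k : nat) (t : fc_term) : bool :=
  if t is TVar n then n < k else true.

(* cat_pattern v [:: t_1; ...; t_m] k says v = t_1 ... t_m, using the variables
   k, k+1, ... for the suffixes t_i ... t_m. *)
Fixpoint cat_pattern (v : nat) (ts : seq fc_term) (k : nat) : fc_formula :=
  match ts with
  | [::] => FCat (TVar v) TEps TEps
  | t :: ts' => FEx k (FAnd (FCat (TVar v) t (TVar k)) (cat_pattern k ts' k.+1))
  end.

Definition pattern_word (s : valuation) (ts : seq fc_term) : word :=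
  flatten [seq term_word s t | t <- ts].

Lemma pattern_word_upd s k u ts :
  all (term_below k) ts -> pattern_word (upd s k u) ts = pattern_word s ts.
Proof.
rewrite /pattern_word; elim: ts => //= t ts IH /andP[t_lt /IH ->]; congr (_ ++ _).
by case: t t_lt => //= n /ltn_eqF /negbT /upd_neq ->.
Qed.

Lemma sat_cat_pattern s v ts k : v < k -> all (term_below k) ts ->
  sat w s (cat_pattern v ts k) <-> is_factor (s v) w /\ s v = pattern_word s ts.
Proof.
elim: ts v k s => [|t ts IH] v k s v_lt; first by rewrite sat_cat.
case/andP=> t_lt ts_lt; have ts_lt' : all (term_below k.+1) ts.
  by apply: sub_all ts_lt => -[n|a|] //= /ltnW.
have v_neq : v != k by rewrite ltn_eqF.
have t_upd u : term_word (upd s k u) t = term_word s t.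
  by case: t t_lt => //= n /ltn_eqF /negbT /upd_neq ->.
rewrite [cat_pattern _ _ _]/= sat_ex; split.
  move=> [u [_ /sat_and [/sat_cat [Fv Ev] /IH [//|//|_ Eu]]]].
  move: Fv Ev Eu => /=; rewrite !upd_eq upd_neq // t_upd pattern_word_upd //.
  by move=> Fv Ev Eu; rewrite Ev Eu in Fv *.
move=> [Fv Ev]; exists (pattern_word s ts).
have Fu : is_factor (pattern_word s ts) w.
  by move: Fv; rewrite Ev /pattern_word /= => /catl_infix.
split=> //; apply/sat_and; split.
  by apply/sat_cat; rewrite /= upd_eq upd_neq // t_upd.
by apply/IH => //; rewrite upd_eq pattern_word_upd.
Qed.

Lemma pattern_word_cat s ts1 ts2 :
  pattern_word s (ts1 ++ ts2) = pattern_word s ts1 ++ pattern_word s ts2.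
Proof. by rewrite /pattern_word map_cat flatten_cat. Qed.

Lemma pattern_word_letters s u : pattern_word s (map TLet u) = u.
Proof. by rewrite /pattern_word; elim: u => //= a u ->. Qed.

Lemma letters_below k u : all (term_below k) (map TLet u).
Proof. by elim: u. Qed.

Definition equals_f (x k : nat) (u : word) : fc_formula := cat_pattern x (map TLet u) k.

Lemma sat_equals s x k u : x < k ->
  sat w s (equals_f x k u) <-> is_factor (s x) w /\ s x = u.
Proof.
by move=> x_lt; rewrite sat_cat_pattern ?letters_below ?pattern_word_letters.
Qed.

Definition prefix_f (x r k : nat) (u : word) : fc_formula :=
  FEx r (cat_pattern x (map TLet u ++ [:: TVar r]) k).

Lemma sat_prefix s x r k u : x < k -> r < k -> x != r ->
  sat w s (prefix_f x r k u) <-> is_factor (s x) w /\ prefix u (s x).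
Proof.
move=> x_lt r_lt x_neq; have ts_lt : all (term_below k) (map TLet u ++ [:: TVar r]).
  by rewrite all_cat letters_below /= r_lt.
have ts_word v : pattern_word (upd s r v) (map TLet u ++ [:: TVar r]) = u ++ v.
  by rewrite pattern_word_cat pattern_word_letters /pattern_word /= cats0 upd_eq.
rewrite sat_ex; split=> [[v [_ /sat_cat_pattern [//|//|]]]|[x_fac /prefixP [v x_eq]]].
  by rewrite ts_word upd_neq // => x_fac x_eq; split=> //; rewrite x_eq prefix_prefix.
have v_fac : is_factor v w by move: x_fac; rewrite x_eq => /catl_infix.
by exists v; split=> //; apply/sat_cat_pattern; rewrite // ts_word upd_neq.
Qed.

Definition suffix_f (x r k : nat) (u : word) : fc_formula :=
  FEx r (cat_pattern x (TVar r :: map TLet u) k).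

Lemma sat_suffix s x r k u : x < k -> r < k -> x != r ->
  sat w s (suffix_f x r k u) <-> is_factor (s x) w /\ suffix u (s x).
Proof.
move=> x_lt r_lt x_neq; have ts_lt : all (term_below k) (TVar r :: map TLet u).
  by rewrite /= r_lt letters_below.
have ts_word v : pattern_word (upd s r v) (TVar r :: map TLet u) = v ++ u.
  by rewrite -cat1s pattern_word_cat pattern_word_letters /pattern_word /= cats0 upd_eq.
rewrite sat_ex; split=> [[v [_ /sat_cat_pattern [//|//|]]]|[x_fac /suffixP [v x_eq]]].
  by rewrite ts_word upd_neq // => x_fac x_eq; split=> //; rewrite x_eq suffix_suffix.
have v_fac : is_factor v w by move: x_fac; rewrite x_eq => /catr_infix.
by exists v; split=> //; apply/sat_cat_pattern; rewrite // ts_word upd_neq.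
Qed.

Definition factor_f (v k : nat) (ts : seq fc_term) : fc_formula :=
  FEx v (cat_pattern v ts k).

Lemma sat_factor s v k ts : v < k -> all (term_below v) ts ->
  sat w s (factor_f v k ts) <-> is_factor (pattern_word s ts) w.
Proof.
move=> v_lt ts_lt; have ts_lt' : all (term_below k) ts.
  by apply: sub_all ts_lt => -[n|a|] //= /ltn_trans; apply.
rewrite sat_ex; split=> [[u [_ /sat_cat_pattern [//|//|]]]|ts_fac].
  by rewrite upd_eq pattern_word_upd // => u_fac <-.
exists (pattern_word s ts); split=> //; apply/sat_cat_pattern => //.
by rewrite upd_eq pattern_word_upd.
Qed.

Definition c_free_f (x p q k : nat) : fc_formula :=
  FNot (FEx p (FEx q (cat_pattern x [:: TVar p; TLet Lc; TVar q] k))).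

Lemma sat_c_free s x p q k : x < k -> p < k -> q < k ->
  x != p -> x != q -> p != q ->
  sat w s (c_free_f x p q k) <-> (is_factor (s x) w -> c_free (s x)).
Proof.
move=> x_lt p_lt q_lt xp xq pq.
have ts_lt : all (term_below k) [:: TVar p; TLet Lc; TVar q] by rewrite /= p_lt q_lt.
have split_word u1 u2 :
    pattern_word (upd (upd s p u1) q u2) [:: TVar p; TLet Lc; TVar q] = u1 ++ Lc :: u2.
  by rewrite /pattern_word /= cats0 (upd_neq _ _ pq) !upd_eq.
have s_x u1 u2 : upd (upd s p u1) q u2 x = s x by rewrite !upd_neq.
rewrite /c_free_f sat_not sat_ex; split=> [no_split x_fac|x_free [u1 [_]]].
  apply/negP => c_in; have [u1 [u2 x_eq]] : exists u1 u2, s x = u1 ++ Lc :: u2.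
    by case/splitPr: c_in => u1 u2; exists u1, u2.
  have u2_fac : is_factor u2 w.
    by move: x_fac; rewrite x_eq => /catl_infix /(catl_infix (s := [:: Lc])).
  apply: no_split; exists u1; split; first by move: x_fac; rewrite x_eq => /catr_infix.
  rewrite sat_ex; exists u2; split=> //.
  by apply/sat_cat_pattern; rewrite // s_x split_word.
rewrite sat_ex => -[u2 [_ /sat_cat_pattern [//|//|]]].
rewrite s_x split_word => x_fac x_eq; move: (x_free x_fac).
by rewrite /c_free x_eq mem_cat inE eqxx orbT.
Qed.

Definition no_extension_f (x y : nat) (a : letter) : fc_formula :=
  FAnd (FNot (FCat (TVar y) (TLet a) (TVar x))) (FNot (FCat (TVar y) (TVar x) (TLet a))).

Definition whole_f (x y : nat) : fc_formula :=
  FAll y (FAnd (no_extension_f x y La)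
               (FAnd (no_extension_f x y Lb) (no_extension_f x y Lc))).

Lemma sat_whole s x y : x != y -> is_factor (s x) w ->
  sat w s (whole_f x y) <-> s x = w.
Proof.
move=> xy x_fac.
have no_ext u a : is_factor u w -> sat w (upd s y u) (no_extension_f x y a) <->
                  u <> a :: s x /\ u <> rcons (s x) a.
  move=> u_fac; rewrite sat_and !sat_not !sat_cat /= upd_eq upd_neq // -cats1.
  split=> -[no_l no_r]; first by split=> u_eq; [apply: no_l | apply: no_r].
  by split=> -[_ u_eq]; [apply: no_l | apply: no_r].
have -> : sat w s (whole_f x y) <->
          forall u, is_factor u w -> forall a, u <> a :: s x /\ u <> rcons (s x) a.
  rewrite sat_all; split=> all_u u u_fac.
    have [ext_a [ext_b ext_c]] := all_u u u_fac.
    by case; apply/(no_ext _ _ u_fac).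
  by split; [|split]; apply/(no_ext _ _ u_fac); apply: all_u.
split=> [maximal | x_eq u u_fac a].
  by apply: infix_maximal x_fac _ => a; split; apply/negP => F; have [] := maximal _ F a.
by rewrite x_eq; split=> u_eq; move: (size_infix u_fac); rewrite u_eq /= ?size_rcons ltnn.
Qed.

Definition recurrence_body : fc_formula :=
  FOr (FNot (FAnd (c_free_f 1 4 5 6) (FAnd (c_free_f 2 4 5 6) (FAnd (c_free_f 3 4 5 6)
        (factor_f 4 5 [:: TLet Lc; TVar 1; TLet Lc; TVar 2; TLet Lc; TVar 3; TLet Lc])))))
      (FCat (TVar 3) (TVar 2) (TVar 1)).

Definition recurrence_f : fc_formula := FAll 1 (FAll 2 (FAll 3 recurrence_body)).

Lemma sat_recurrence_body s x y z :
  sat w (upd (upd (upd s 1 x) 2 y) 3 z) recurrence_body <->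
  ~ [/\ is_factor x w -> c_free x, is_factor y w -> c_free y,
        is_factor z w -> c_free z & is_factor (Lc :: enc [:: x; y; z]) w]
  \/ is_factor z w /\ z = y ++ x.
Proof.
have triple_word : pattern_word (upd (upd (upd s 1 x) 2 y) 3 z)
    [:: TLet Lc; TVar 1; TLet Lc; TVar 2; TLet Lc; TVar 3; TLet Lc] = Lc :: enc [:: x; y; z].
  by rewrite /pattern_word /enc /= -!catA.
rewrite sat_or sat_not !sat_and !sat_c_free // sat_factor // triple_word sat_cat /upd /=.
split=> -[not_triple | recur]; [left | by right | left | by right].
  by case=> ? ? ? ?; apply: not_triple.
by case=> ? [? [? ?]]; apply: not_triple.
Qed.

Lemma sat_recurrence s : sat w s recurrence_f <-> triples_recur w.
Proof.
rewrite sat_all; split=> [recur x y z x_free y_free z_free xyz_fac | recur x x_fac].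
  have block_fac b : b \in [:: x; y; z] -> is_factor b w.
    move=> /enc_block_infix b_infix; apply: (infix_trans _ xyz_fac).
    exact: (infix_trans b_infix (infix_cons _ _)).
  have [x_fac y_fac z_fac] : [/\ is_factor x w, is_factor y w & is_factor z w].
    by split; apply: block_fac; rewrite !inE eqxx ?orbT.
  have := recur x x_fac; rewrite sat_all => /(_ y y_fac); rewrite sat_all => /(_ z z_fac).
  by rewrite sat_recurrence_body => -[[] | [_ ->]].
rewrite sat_all => y y_fac; rewrite sat_all => z z_fac; apply/sat_recurrence_body.
have [zyx|zyx] := eqVneq z (y ++ x); [by right | left].
by case=> x_free y_free z_free xyz_fac; case/eqP: zyx; apply: recur xyz_fac; auto.
Qed.

Definition shape_f : fc_formula :=
  FAnd (FOr (equals_f 0 1 [:: Lc; La; Lc]) (prefix_f 0 1 2 [:: Lc; La; Lc; La; Lb; Lc]))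
       (FAnd (suffix_f 0 1 2 [:: Lc]) recurrence_f).

Lemma sat_shape s : s 0 = w -> sat w s shape_f <-> fib_shape w.
Proof.
move=> s0_eq; have w_fac : is_factor w w := infix_refl w.
rewrite !sat_and sat_or sat_equals // sat_prefix // sat_suffix // sat_recurrence s0_eq.
split=> [[start [[_ ends] recur]] | [start ends recur]].
  by split=> //; case: start => [[_ ->] | [_ ?]]; [left | right].
by split=> //; case: start => [->|?]; [left | right].
Qed.

End Semantics.

Definition fib_sentence : fc_formula := FEx 0 (FAnd (whole_f 0 1) shape_f).

Lemma models_fib_sentence w : models w fib_sentence <-> fib_shape w.
Proof.
rewrite /models sat_ex; split=> [[u [u_fac]] | shape].
  by rewrite sat_and sat_whole ?upd_eq // => -[u_eq]; rewrite sat_shape ?upd_eq.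
exists w; split; first exact: infix_refl.
rewrite sat_and sat_whole ?upd_eq ?sat_shape ?upd_eq //; exact: infix_refl.
Qed.

Theorem proposition4p1 : in_L_FC L_fib.
Proof.
exists fib_sentence; split=> // w; rewrite /lang_of models_fib_sentence.
by split=> [[n ->] | /fib_shape_block]; first exact: fib_block_shape.
Qed.
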